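(* Let $A$ be a modal formula and let $t$ be a translation for $A$ based on a sequence $Q=\{q_i\}_{i=0}^\infty$ of atoms not occurring in $A$. If $\mathbf{GL}\vdash A^t$, then $\mathbf{K4}\vdash A$.
   Context: Modal formulas are built from atoms and $\bot$ using $\wedge,\vee,\to,\neg,\Box$. $\mathbf{K4}$ is the normal modal logic with axioms $\mathbf{K}$ and $\Box A\to\Box\Box A$; $\mathbf{GL}$ is $\mathbf{K4}$ plus Löb's axiom $\Box(\Box A\to A)\to\Box A$. A translation $t$ for $A$ based on $Q$ is an assignment of natural numbers to the occurrences of $\Box$ in $A$ such that the number assigned to any box occurrence is greater than the numbers assigned to all box occurrences within its scope. $A^t$ is defined by: $p^t=p$ for atoms; $(B\circ C)^t=B^t\circ C^t$ for $\circ\in\{\wedge,\vee,\to\}$; $(\neg B)^t=\neg B^t$; $(\Box B)^t=\Box(\bigwedge_{i=0}^n q_i\to B^t)$ where $n$ is the number $t$ assigns to that box occurrence. *)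

From Stdlib Require Import Arith List Bool.

Inductive form : Type :=
| Atom : nat -> form
| Bot : form
| And : form -> form -> form
| Or : form -> form -> form
| Imp : form -> form -> form
| Neg : form -> form
| Box : form -> form.

Fixpoint occurs (p : nat) (A : form) : Prop :=
  match A with
  | Atom q => p = q
  | Bot => False
  | And B C | Or B C | Imp B C => occurs p B \/ occurs p C
  | Neg B | Box B => occurs p B
  end.

(* Propositional (boolean) evaluation, with boxed formulas treated as
   propositional atoms: va values atoms, vb values formulas of the form Box B. *)
Fixpoint tval (va : nat -> bool) (vb : form -> bool) (A : form) : bool :=
  match A with
  | Atom p => va p
  | Bot => false
  | And B C => tval va vb B && tval va vb C
  | Or B C => tval va vb B || tval va vb C
  | Imp B C => implb (tval va vb B) (tval va vb C)
  | Neg B => negb (tval va vb B)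
  | Box B => vb B
  end.

Definition tautology (A : form) : Prop :=
  forall va vb, tval va vb A = true.

Inductive K4_prv : form -> Prop :=
| K4_taut A : tautology A -> K4_prv A
| K4_K A B : K4_prv (Imp (Box (Imp A B)) (Imp (Box A) (Box B)))
| K4_4 A : K4_prv (Imp (Box A) (Box (Box A)))
| K4_mp A B : K4_prv (Imp A B) -> K4_prv A -> K4_prv B
| K4_nec A : K4_prv A -> K4_prv (Box A).

Inductive GL_prv : form -> Prop :=
| GL_taut A : tautology A -> GL_prv A
| GL_K A B : GL_prv (Imp (Box (Imp A B)) (Imp (Box A) (Box B)))
| GL_4 A : GL_prv (Imp (Box A) (Box (Box A)))
| GL_Lob A : GL_prv (Imp (Box (Imp (Box A) A)) (Box A))
| GL_mp A B : GL_prv (Imp A B) -> GL_prv A -> GL_prv B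
| GL_nec A : GL_prv A -> GL_prv (Box A).

(* A formula whose box occurrences are annotated with natural numbers:
   this is how we represent an assignment t of numbers to box occurrences. *)
Inductive aform : Type :=
| AAtom : nat -> aform
| ABot : aform
| AAnd : aform -> aform -> aform
| AOr : aform -> aform -> aform
| AImp : aform -> aform -> aform
| ANeg : aform -> aform
| ABox : nat -> aform -> aform.

Fixpoint erase (T : aform) : form :=
  match T with
  | AAtom p => Atom p
  | ABot => Bot
  | AAnd B C => And (erase B) (erase C)
  | AOr B C => Or (erase B) (erase C)
  | AImp B C => Imp (erase B) (erase C)
  | ANeg B => Neg (erase B)
  | ABox _ B => Box (erase B)
  end.

Fixpoint boxes_below (n : nat) (T : aform) : Prop :=
  match T with
  | AAtom _ | ABot => True
  | AAnd B C | AOr B C | AImp B C => boxes_below n B /\ boxes_below n C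
  | ANeg B => boxes_below n B
  | ABox m B => m < n /\ boxes_below n B
  end.

Fixpoint wf_transl (T : aform) : Prop :=
  match T with
  | AAtom _ | ABot => True
  | AAnd B C | AOr B C | AImp B C => wf_transl B /\ wf_transl C
  | ANeg B => wf_transl B
  | ABox m B => boxes_below m B /\ wf_transl B
  end.

Definition translation_for (A : form) (t : aform) : Prop :=
  erase t = A /\ wf_transl t.

Fixpoint bigconj (q : nat -> nat) (n : nat) : form :=
  match n with
  | 0 => Atom (q 0)
  | S k => And (bigconj q k) (Atom (q (S k)))
  end.

Fixpoint apply_transl (q : nat -> nat) (T : aform) : form :=
  match T with
  | AAtom p => Atom p
  | ABot => Bot
  | AAnd B C => And (apply_transl q B) (apply_transl q C)
  | AOr B C => Or (apply_transl q B) (apply_transl q C)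
  | AImp B C => Imp (apply_transl q B) (apply_transl q C)
  | ANeg B => Neg (apply_transl q B)
  | ABox n B => Box (Imp (bigconj q n) (apply_transl q B))
  end.

(* If K4 does not prove A, the canonical model of K4 built from the sets that are
   maximal consistent with respect to the subformulas of A is a transitive Kripke
   model refuting A.  Stratify it: the worlds become pairs (w, k), with (w, k) seeing
   (v, j) iff w sees v and j < k, and the atom q_i is made true at (w, k) iff i < k.
   This frame is transitive and conversely well-founded, so it validates GL.  Since
   q_0 /\ ... /\ q_n holds exactly at the levels above n, the box of A^t numbered n
   only looks at levels between n + 1 and the current one; as t numbers every box
   above the boxes in its scope, an induction on t shows that A^t holds at (w, k)
   iff A holds at w, as soon as k exceeds all numbers used by t.  So A^t is refuted
   as well, and GL does not prove it. *)

From Stdlib Require Import Arith List Bool Lia Classical ClassicalEpsilon Wellfounded Relations.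
Import ListNotations.

Fixpoint conjs (l : list form) : form :=
  match l with [] => Neg Bot | x :: l' => And x (conjs l') end.

Lemma tval_conjs_app va vb l1 l2 :
  tval va vb (conjs (l1 ++ l2)) = tval va vb (conjs l1) && tval va vb (conjs l2).
Proof. induction l1 as [|x l1 IH]; simpl; [reflexivity|]. now rewrite IH, andb_assoc. Qed.

Ltac prove_tautology :=
  unfold tautology; intros va vb; simpl; rewrite ?tval_conjs_app;
  repeat match goal with
  | |- context [tval va vb ?X] => destruct (tval va vb X)
  | |- context [vb ?X] => destruct (vb X)
  | |- context [va ?X] => destruct (va X)
  end; reflexivity.

Lemma K4_taut_mp1 F G : tautology (Imp F G) -> K4_prv F -> K4_prv G.
Proof. intros HT HF. exact (K4_mp _ _ (K4_taut _ HT) HF). Qed.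

Lemma K4_taut_mp2 F1 F2 G :
  tautology (Imp F1 (Imp F2 G)) -> K4_prv F1 -> K4_prv F2 -> K4_prv G.
Proof. intros HT H1. apply K4_mp. exact (K4_taut_mp1 _ _ HT H1). Qed.

Lemma K4_taut_mp3 F1 F2 F3 G : tautology (Imp F1 (Imp F2 (Imp F3 G))) ->
  K4_prv F1 -> K4_prv F2 -> K4_prv F3 -> K4_prv G.
Proof. intros HT H1 H2. apply K4_mp. exact (K4_taut_mp2 _ _ _ HT H1 H2). Qed.

Lemma K4_taut_mp4 F1 F2 F3 F4 G : tautology (Imp F1 (Imp F2 (Imp F3 (Imp F4 G)))) ->
  K4_prv F1 -> K4_prv F2 -> K4_prv F3 -> K4_prv F4 -> K4_prv G.
Proof. intros HT H1 H2 H3. apply K4_mp. exact (K4_taut_mp3 _ _ _ _ HT H1 H2 H3). Qed.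

Lemma K4_box_mono X Y : K4_prv (Imp X Y) -> K4_prv (Imp (Box X) (Box Y)).
Proof. intros H. exact (K4_mp _ _ (K4_K X Y) (K4_nec _ H)). Qed.

Lemma K4_box_mono2 X Y Z :
  K4_prv (Imp X (Imp Y Z)) -> K4_prv (Imp (Box X) (Imp (Box Y) (Box Z))).
Proof.
  intros H. apply K4_box_mono in H.
  eapply K4_taut_mp2; [|exact H|exact (K4_K Y Z)]. prove_tautology.
Qed.

Definition consistent (S : form -> Prop) : Prop :=
  forall l, (forall x, In x l -> S x) -> ~ K4_prv (Neg (conjs l)).

Lemma conjs_split_off (S : form -> Prop) phi l :
  (forall x, In x l -> S x \/ x = phi) ->
  exists l', (forall x, In x l' -> S x) /\ K4_prv (Imp (conjs l') (Imp phi (conjs l))).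
Proof.
  induction l as [|x l IH]; intros Hl.
  - exists []; split; [easy|]. apply K4_taut; prove_tautology.
  - destruct IH as [l' [Hl' Himp]]; [intros y Hy; apply Hl; now right|].
    destruct (Hl x (or_introl eq_refl)) as [Hx| ->].
    + exists (x :: l'); split; [intros y [<-|Hy]; auto|].
      eapply K4_taut_mp1; [|exact Himp]. prove_tautology.
    + exists l'; split; [exact Hl'|].
      eapply K4_taut_mp1; [|exact Himp]. prove_tautology.
Qed.

Lemma consistent_add_or_add_neg S phi : consistent S ->
  consistent (fun x => S x \/ x = phi) \/ consistent (fun x => S x \/ x = Neg phi).
Proof.
  intros HS. destruct (classic (consistent (fun x => S x \/ x = phi))) as [H|H]; [now left|right].
  intros l2 Hl2 Hp2. apply H. intros l1 Hl1 Hp1.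
  destruct (conjs_split_off S phi l1 Hl1) as [l1' [Hl1' Himp1]].
  destruct (conjs_split_off S (Neg phi) l2 Hl2) as [l2' [Hl2' Himp2]].
  apply (HS (l1' ++ l2')).
  - intros x Hx. apply in_app_or in Hx as [Hx|Hx]; auto.
  - eapply K4_taut_mp4; [|exact Himp1|exact Hp1|exact Himp2|exact Hp2]. prove_tautology.
Qed.

Fixpoint lindenbaum (S : form -> Prop) (l : list form) : form -> Prop :=
  match l with
  | [] => S
  | phi :: l' =>
      let S' := lindenbaum S l' in
      if excluded_middle_informative (consistent (fun x => S' x \/ x = phi))
      then fun x => S' x \/ x = phi else fun x => S' x \/ x = Neg phi
  end.

Lemma lindenbaum_step_incl S phi l x :
  lindenbaum S l x -> lindenbaum S (phi :: l) x.
Proof. simpl. destruct excluded_middle_informative; now left. Qed.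

Lemma lindenbaum_incl S l x : S x -> lindenbaum S l x.
Proof. induction l; auto using lindenbaum_step_incl. Qed.

Lemma lindenbaum_consistent S l : consistent S -> consistent (lindenbaum S l).
Proof.
  intros HS. induction l as [|phi l IH]; simpl; [exact HS|].
  destruct excluded_middle_informative; [assumption|].
  destruct (consistent_add_or_add_neg _ phi IH); tauto.
Qed.

Lemma lindenbaum_decides S l phi :
  In phi l -> lindenbaum S l phi \/ lindenbaum S l (Neg phi).
Proof.
  induction l as [|a l IH]; [easy|]. intros [<-|Hin].
  - simpl. destruct excluded_middle_informative; auto.
  - destruct (IH Hin); [left|right]; now apply lindenbaum_step_incl.
Qed.

Fixpoint subforms (A : form) : list form :=
  match A with
  | Atom _ | Bot => [A]
  | And B C | Or B C | Imp B C => A :: subforms B ++ subforms C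
  | Neg B | Box B => A :: subforms B
  end.

Lemma subforms_refl A : In A (subforms A).
Proof. destruct A; simpl; auto. Qed.

Lemma subforms_trans A B x : In B (subforms A) -> In x (subforms B) -> In x (subforms A).
Proof.
  revert B. induction A; simpl; intros B [<-|HB] Hx; auto;
    try (apply in_app_or in HB as [HB|HB]); right; eauto using in_or_app.
Qed.

Fixpoint forces {W : Type} (R : W -> W -> Prop) (V : nat -> W -> Prop) (w : W) (F : form)
  : Prop :=
  match F with
  | Atom p => V p w
  | Bot => False
  | And B C => forces R V w B /\ forces R V w C
  | Or B C => forces R V w B \/ forces R V w C
  | Imp B C => forces R V w B -> forces R V w C
  | Neg B => ~ forces R V w B
  | Box B => forall v, R w v -> forces R V v B
  end.

Definition bdec (P : Prop) : bool := if excluded_middle_informative P then true else false.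

Lemma bdec_true P : bdec P = true <-> P.
Proof. unfold bdec; destruct excluded_middle_informative; split; easy. Qed.

Lemma tval_forces {W} R V (w : W) F :
  tval (fun p => bdec (V p w)) (fun B => bdec (forces R V w (Box B))) F = true
  <-> forces R V w F.
Proof.
  induction F; simpl.
  - apply bdec_true.
  - easy.
  - now rewrite andb_true_iff, IHF1, IHF2.
  - now rewrite orb_true_iff, IHF1, IHF2.
  - now rewrite implb_true_iff, IHF1, IHF2.
  - now rewrite negb_true_iff, <- not_true_iff_false, IHF.
  - apply bdec_true.
Qed.

Lemma GL_sound {W} (R : W -> W -> Prop) V :
  transitive _ R -> well_founded (fun x y => R y x) ->
  forall F, GL_prv F -> forall w, forces R V w F.
Proof.
  intros Htr Hwf F HF. induction HF; intros w; simpl.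
  - apply tval_forces, H.
  - intros H1 H2 v Hv. now apply H1, H2.
  - intros H1 v Hv u Hu. eauto.
  - intros H v. induction v as [v IH] using (well_founded_ind Hwf). intros Hwv.
    apply (H v Hwv). intros u Hvu. eauto.
  - apply IHHF1, IHHF2.
  - intros v _. apply IHHF.
Qed.

Definition box_seed (G : form -> Prop) (B : form) (x : form) : Prop :=
  x = Neg B \/ exists C, G (Box C) /\ (x = C \/ x = Box C).

Lemma box_seed_necessitate G B l : (forall x, In x l -> box_seed G B x) ->
  exists l', (forall x, In x l' -> G x) /\
    K4_prv (Imp (conjs l') (Box (Imp (Neg B) (conjs l)))).
Proof.
  induction l as [|x l IH]; intros Hl.
  - exists []; split; [easy|].
    assert (Htriv : K4_prv (Imp (Neg B) (conjs []))) by (apply K4_taut; prove_tautology).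
    eapply K4_taut_mp1; [|exact (K4_nec _ Htriv)]. prove_tautology.
  - destruct IH as [l' [Hl' Himp]]; [intros y Hy; apply Hl; now right|].
    destruct (Hl x (or_introl eq_refl)) as [->|[C [HC [->| ->]]]].
    + exists l'; split; [exact Hl'|].
      assert (Hstep : K4_prv (Imp (Imp (Neg B) (conjs l)) (Imp (Neg B) (conjs (Neg B :: l)))))
        by (apply K4_taut; prove_tautology).
      apply K4_box_mono in Hstep.
      eapply K4_taut_mp2; [|exact Himp|exact Hstep]. prove_tautology.
    + exists (Box C :: l'); split; [intros y [<-|Hy]; auto|].
      assert (Hstep : K4_prv (Imp C (Imp (Imp (Neg B) (conjs l)) (Imp (Neg B) (conjs (C :: l))))))
        by (apply K4_taut; prove_tautology).
      apply K4_box_mono2 in Hstep.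
      eapply K4_taut_mp2; [|exact Himp|exact Hstep]. prove_tautology.
    + (* Axiom 4 turns the hypothesis [Box C] into the needed [Box (Box C)]. *)
      exists (Box C :: l'); split; [intros y [<-|Hy]; auto|].
      assert (Hstep : K4_prv (Imp (Box C)
                (Imp (Imp (Neg B) (conjs l)) (Imp (Neg B) (conjs (Box C :: l))))))
        by (apply K4_taut; prove_tautology).
      apply K4_box_mono2 in Hstep.
      eapply K4_taut_mp3; [|exact Himp|exact Hstep|exact (K4_4 C)]. prove_tautology.
Qed.

Lemma box_seed_consistent G B :
  consistent G -> G (Neg (Box B)) -> consistent (box_seed G B).
Proof.
  intros HG HnB l Hl Hl_incons.
  destruct (box_seed_necessitate G B l Hl) as [l' [Hl' Himp]].
  assert (HboxB : K4_prv (Imp (Box (Imp (Neg B) (conjs l))) (Box B))).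
  { apply K4_box_mono. eapply K4_taut_mp1; [|exact Hl_incons]. prove_tautology. }
  apply (HG (Neg (Box B) :: l')).
  - intros y [<-|Hy]; auto.
  - eapply K4_taut_mp2; [|exact Himp|exact HboxB]. prove_tautology.
Qed.

Section CanonicalModel.
Variable A : form.

Definition world (G : form -> Prop) : Prop :=
  consistent G /\ forall phi, In phi (subforms A) -> G phi \/ G (Neg phi).

Definition canon_rel (G D : form -> Prop) : Prop :=
  world D /\ forall C, G (Box C) -> D C /\ D (Box C).

Definition canon_val (p : nat) (G : form -> Prop) : Prop := G (Atom p).

Lemma canon_rel_trans : transitive _ canon_rel.
Proof. intros G D E [_ HGD] [HE HDE]. split; [exact HE|]. intros C HC. apply HDE, HGD, HC. Qed.

Lemma lindenbaum_world S : consistent S -> world (lindenbaum S (subforms A)).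
Proof.
  intros HS. split; [now apply lindenbaum_consistent|]. intros phi Hphi.
  now apply lindenbaum_decides.
Qed.

Lemma world_closed G l phi : world G -> (forall x, In x l -> G x) ->
  K4_prv (Imp (conjs l) phi) -> In phi (subforms A) -> G phi.
Proof.
  intros [Hc Hmax] Hl Himp Hphi. destruct (Hmax phi Hphi) as [H|H]; [exact H|].
  exfalso. apply (Hc (Neg phi :: l)).
  - intros x [<-|Hx]; auto.
  - eapply K4_taut_mp1; [|exact Himp]. prove_tautology.
Qed.

Lemma world_not_both G phi : world G -> G phi -> G (Neg phi) -> False.
Proof.
  intros [Hc _] H1 H2. apply (Hc [phi; Neg phi]).
  - intros x [<-|[<-|[]]]; auto.
  - apply K4_taut; prove_tautology.
Qed.

Lemma canon_rel_witness G B : world G -> G (Neg (Box B)) ->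
  exists D, canon_rel G D /\ D (Neg B).
Proof.
  intros HG HnB. pose proof (box_seed_consistent G B (proj1 HG) HnB) as Hseed.
  exists (lindenbaum (box_seed G B) (subforms A)). split; [split|].
  - now apply lindenbaum_world.
  - intros C HC. split; apply lindenbaum_incl; right; eauto.
  - apply lindenbaum_incl. now left.
Qed.

Ltac subform_of_subform :=
  eapply subforms_trans; [eassumption|simpl; auto using in_or_app, subforms_refl].

Ltac close_world G l :=
  apply (world_closed G l);
  [ assumption
  | intros ? Hx; simpl in Hx; repeat destruct Hx as [<-|Hx]; auto; contradiction
  | apply K4_taut; prove_tautology
  | assumption || subform_of_subform ].

Lemma canon_truth phi : In phi (subforms A) ->
  forall G, world G -> forces canon_rel canon_val G phi <-> G phi.
Proof.
  induction phi; intros Hin G HG; simpl.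
  - reflexivity.
  - split; [easy|]. intros HBot. apply (proj1 HG [Bot]).
    + intros x [<-|[]]; auto.
    + apply K4_taut; prove_tautology.
  - rewrite IHphi1, IHphi2 by (assumption || subform_of_subform). split.
    + intros [H1 H2]. close_world G [phi1; phi2].
    + intros H. split; close_world G [And phi1 phi2].
  - rewrite IHphi1, IHphi2 by (assumption || subform_of_subform). split.
    + intros [H|H]; [close_world G [phi1]|close_world G [phi2]].
    + intros H. destruct (proj2 HG phi1 ltac:(subform_of_subform)) as [H1|H1]; [now left|right].
      close_world G [Or phi1 phi2; Neg phi1].
  - rewrite IHphi1, IHphi2 by (assumption || subform_of_subform). split.
    + intros H. destruct (proj2 HG phi1 ltac:(subform_of_subform)) as [H1|H1].
      * close_world G [phi2].
      * close_world G [Neg phi1].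
    + intros H H1. close_world G [Imp phi1 phi2; phi1].
  - rewrite IHphi by (assumption || subform_of_subform). split.
    + intros H. destruct (proj2 HG phi ltac:(subform_of_subform)); tauto.
    + intros H H1. now apply (world_not_both G phi).
  - split.
    + intros H. destruct (proj2 HG _ Hin) as [HB|HnB]; [exact HB|exfalso].
      destruct (canon_rel_witness G phi HG HnB) as [D [HGD HnD]].
      apply (world_not_both D phi (proj1 HGD)); [|exact HnD].
      apply (IHphi ltac:(subform_of_subform) D (proj1 HGD)), H, HGD.
    + intros H D [HD HGD]. apply (IHphi ltac:(subform_of_subform) D HD), HGD, H.
Qed.

End CanonicalModel.

Lemma K4_transitive_countermodel A : ~ K4_prv A ->
  exists (W : Type) (R : W -> W -> Prop) (V : nat -> W -> Prop) (w : W),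
    transitive _ R /\ ~ forces R V w A.
Proof.
  intros HA.
  assert (Hroot : consistent (fun x => x = Neg A)).
  { intros l Hl Hl_incons. apply HA.
    assert (Himp : K4_prv (Imp (Neg A) (conjs l))).
    { clear Hl_incons. induction l as [|x l IH]; [apply K4_taut; prove_tautology|].
      rewrite (Hl x (or_introl eq_refl)).
      eapply K4_taut_mp1; [|apply IH; intros; apply Hl; now right]. prove_tautology. }
    eapply K4_taut_mp2; [|exact Hl_incons|exact Himp]. prove_tautology. }
  set (G := lindenbaum (fun x => x = Neg A) (subforms A)).
  assert (HG : world A G) by now apply lindenbaum_world.
  exists (form -> Prop), (canon_rel A), canon_val, G. split; [apply canon_rel_trans|].
  rewrite (canon_truth A A (subforms_refl A) G HG).
  intros HGA. apply (world_not_both A G A HG HGA), lindenbaum_incl. reflexivity.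
Qed.

Lemma boxes_below_mono T b b' : b <= b' -> boxes_below b T -> boxes_below b' T.
Proof. induction T; simpl; intuition lia. Qed.

Fixpoint box_bound (T : aform) : nat :=
  match T with
  | AAtom _ | ABot => 0
  | AAnd B C | AOr B C | AImp B C => Nat.max (box_bound B) (box_bound C)
  | ANeg B => box_bound B
  | ABox n B => Nat.max (S n) (box_bound B)
  end.

Lemma boxes_below_box_bound T : boxes_below (box_bound T) T.
Proof.
  induction T; cbn [box_bound boxes_below]; try exact I; try assumption.
  1-3: split; (eapply boxes_below_mono; [|eassumption]); lia.
  split; [lia|]. eapply boxes_below_mono; [|eassumption]. lia.
Qed.

Section Stratification.
Variables (W : Type) (R : W -> W -> Prop) (V : nat -> W -> Prop) (q : nat -> nat).
Hypothesis q_inj : forall i j, q i = q j -> i = j.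

Definition strat_rel (x y : W * nat) : Prop := R (fst x) (fst y) /\ snd y < snd x.

Definition strat_val (p : nat) (x : W * nat) : Prop :=
  (exists i, q i = p /\ i < snd x) \/ ((forall i, q i <> p) /\ V p (fst x)).

Lemma strat_rel_trans : transitive _ R -> transitive _ strat_rel.
Proof. intros HR x y z [Hxy Hxy'] [Hyz Hyz']. split; [eapply HR; eauto|lia]. Qed.

Lemma strat_rel_conv_wf : well_founded (fun x y => strat_rel y x).
Proof.
  apply (wf_incl _ _ (fun x y => snd x < snd y)); [now intros x y [_ H]|].
  apply (wf_inverse_image _ nat lt snd), lt_wf.
Qed.

Lemma forces_bigconj n v k : forces strat_rel strat_val (v, k) (bigconj q n) <-> n < k.
Proof.
  induction n as [|n IH]; simpl; [|rewrite IH]; unfold strat_val; simpl; split.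
  - intros [[i [Hi Hik]]|[Hnq _]]; [apply q_inj in Hi; lia|now destruct (Hnq 0)].
  - intros Hk. left. now exists 0.
  - intros [Hk [[i [Hi Hik]]|[Hnq _]]]; [apply q_inj in Hi; lia|now destruct (Hnq (S n))].
  - intros Hk. split; [lia|]. left. now exists (S n).
Qed.

Lemma forces_apply_transl T : wf_transl T -> (forall i, ~ occurs (q i) (erase T)) ->
  forall b, boxes_below b T -> forall w k, b < k ->
  forces strat_rel strat_val (w, k) (apply_transl q T) <-> forces R V w (erase T).
Proof.
  induction T; simpl; intros Hwf Hfresh b Hb w k Hk.
  - unfold strat_val; simpl. split.
    + intros [[i [Hi _]]|[_ H]]; [now destruct (Hfresh i)|exact H].
    + intros H. right. split; [intros i Hi; now apply (Hfresh i)|exact H].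
  - reflexivity.
  - rewrite IHT1, IHT2 by (intuition eauto). reflexivity.
  - rewrite IHT1, IHT2 by (intuition eauto). reflexivity.
  - rewrite IHT1, IHT2 by (intuition eauto). reflexivity.
  - rewrite IHT by eauto. reflexivity.
  - destruct Hwf as [Hbn Hwf], Hb as [Hnb Hb]. split.
    + intros H v Hv. apply (IHT Hwf Hfresh n Hbn v (S n)); [lia|].
      apply (H (v, S n)); [split; simpl; [exact Hv|lia]|]. apply forces_bigconj. lia.
    + intros H [v j] [Hv Hj] Hc. simpl in *. apply forces_bigconj in Hc.
      apply (IHT Hwf Hfresh n Hbn v j Hc), H, Hv.
Qed.

End Stratification.

Theorem theorem4p3 (A : form) (t : aform) (q : nat -> nat) :
  (forall i j, q i = q j -> i = j) ->
  (forall i, ~ occurs (q i) A) ->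
  translation_for A t ->
  GL_prv (apply_transl q t) ->
  K4_prv A.
Proof.
  intros Hinj Hfresh [<- Hwf] HGL. apply NNPP. intros HK4.
  destruct (K4_transitive_countermodel _ HK4) as (W & R & V & w & Htrans & Hw).
  apply Hw.
  apply (forces_apply_transl W R V q Hinj t Hwf Hfresh (box_bound t)
           (boxes_below_box_bound t) w (S (box_bound t))); [lia|].
  apply GL_sound; [now apply strat_rel_trans|apply strat_rel_conv_wf|exact HGL].
Qed.
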